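(* Let $A$ be a set and let $\alpha,\beta$ be quasiorders on $A$. The following are equivalent: (1) $\alpha\cap\beta=\Delta_A$ and $\alpha\cup\beta=A\times A$; (2) $\alpha\cap\beta=\Delta_A$ and $(\alpha\cap\gamma)\vee(\beta\cap\gamma)=\gamma$ for every quasiorder $\gamma$ on $A$.
   Context: A quasiorder on a set $A$ is a reflexive and transitive binary relation on $A$; $\Delta_A=\{(a,a)\mid a\in A\}$. The set $\mathrm{Quord}(A)$ of all quasiorders on $A$ is a complete lattice under inclusion; $\cap$ is intersection and $\gamma_1\vee\gamma_2$ denotes the join in this lattice, i.e. the smallest quasiorder containing $\gamma_1\cup\gamma_2$ (the transitive closure of $\gamma_1\cup\gamma_2$). *)

From Stdlib Require Import Relations.

Definition quasiorder {A : Type} (r : relation A) : Prop :=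
  reflexive A r /\ transitive A r.

Definition rel_eq {A : Type} (r s : relation A) : Prop :=
  forall x y, r x y <-> s x y.

Definition rel_cap {A : Type} (r s : relation A) : relation A :=
  fun x y => r x y /\ s x y.

Definition rel_cup {A : Type} (r s : relation A) : relation A :=
  fun x y => r x y \/ s x y.

Definition diag (A : Type) : relation A := fun x y => x = y.

Definition full (A : Type) : relation A := fun _ _ => True.

Definition qjoin {A : Type} (r s : relation A) : relation A :=
  clos_trans A (rel_cup r s).

From Stdlib Require Import Relations.

(* If the union is full, every gamma-step lies in alpha
   or in beta, and the join never exceeds gamma since gamma is transitive.
   Conversely, applying the identity to the smallest quasiorder containing a pair
   (x, y) shows that a single alpha- or beta-step joins x to y. *)

Section QuasiorderJoin.

Variable A : Type.

Lemma clos_trans_incl_transitive (r g : relation A) :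
  inclusion A r g -> transitive A g -> inclusion A (clos_trans A r) g.
Proof.
  intros Hrg Tg x y H.
  induction H as [u v h | u v w _ IH1 _ IH2].
  - exact (Hrg u v h).
  - exact (Tg u v w IH1 IH2).
Qed.

Lemma qjoin_cap_eq (alpha beta gamma : relation A) :
  rel_eq (rel_cup alpha beta) (full A) -> transitive A gamma ->
  rel_eq (qjoin (rel_cap alpha gamma) (rel_cap beta gamma)) gamma.
Proof.
  intros Hfull Tg x y. split.
  - apply clos_trans_incl_transitive; [|exact Tg].
    intros u v [[_ h] | [_ h]]; exact h.
  - intro h. apply t_step.
    destruct (proj2 (Hfull x y) I) as [ha | hb].
    + left. split; assumption.
    + right. split; assumption.
Qed.

Definition pair_closure (x y : A) : relation A :=
  fun u v => u = v \/ (u = x /\ v = y).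

Lemma quasiorder_pair_closure (x y : A) : quasiorder (pair_closure x y).
Proof.
  split.
  - intro u. left. reflexivity.
  - intros u v w [e1 | [e1 e2]] [e3 | [e3 e4]]; subst; unfold pair_closure; auto.
Qed.

Lemma clos_trans_sub_pair_closure (r : relation A) (x y : A) :
  inclusion A r (pair_closure x y) ->
  forall u v, clos_trans A r u v -> u = v \/ r x y.
Proof.
  intros Hr u v H.
  induction H as [u v h | u v w _ IH1 _ IH2].
  - destruct (Hr u v h) as [e | [e1 e2]]; subst; auto.
  - destruct IH1 as [e1 | h]; destruct IH2 as [e2 | h']; subst; auto.
Qed.

Lemma cup_full_of_qjoin_cap (alpha beta : relation A) :
  reflexive A alpha ->
  (forall gamma : relation A, quasiorder gamma ->
     rel_eq (qjoin (rel_cap alpha gamma) (rel_cap beta gamma)) gamma) ->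
  rel_eq (rel_cup alpha beta) (full A).
Proof.
  intros Ra Hjoin x y. split; [intros _; exact I | intros _].
  set (g := pair_closure x y).
  assert (Hxy : qjoin (rel_cap alpha g) (rel_cap beta g) x y).
  { apply (Hjoin g (quasiorder_pair_closure x y)). right. auto. }
  assert (Hsub : inclusion A (rel_cup (rel_cap alpha g) (rel_cap beta g)) g).
  { intros u v [[_ h] | [_ h]]; exact h. }
  destruct (clos_trans_sub_pair_closure _ x y Hsub x y Hxy)
    as [e | [[ha _] | [hb _]]].
  - subst. left. apply Ra.
  - left. exact ha.
  - right. exact hb.
Qed.

End QuasiorderJoin.

Theorem proposition2p1 (A : Type) (alpha beta : relation A)
  (Ha : quasiorder alpha) (Hb : quasiorder beta) :
  (rel_eq (rel_cap alpha beta) (diag A) /\ rel_eq (rel_cup alpha beta) (full A))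
  <->
  (rel_eq (rel_cap alpha beta) (diag A) /\
   forall gamma : relation A, quasiorder gamma ->
     rel_eq (qjoin (rel_cap alpha gamma) (rel_cap beta gamma)) gamma).
Proof.
  split; intros [Hdiag H]; split; try exact Hdiag.
  - intros gamma [_ Tg]. exact (qjoin_cap_eq A alpha beta gamma H Tg).
  - exact (cup_full_of_qjoin_cap A alpha beta (proj1 Ha) H).
Qed.
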